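(* Let $\textnormal{R}\in\{\textnormal{CH},\textnormal{wCH}\}$ and let $\omega\in\Omega$ be any path. Then $I_\textnormal{R}(\omega)$ is the smallest interval forecast that $\omega$ is $\textnormal{R}$-random for; that is, $\omega$ is $\textnormal{R}$-random for $I_\textnormal{R}(\omega)$, and $I_\textnormal{R}(\omega)\subseteq I$ for every interval forecast $I$ that $\omega$ is $\textnormal{R}$-random for.
   Context: $\mathcal{X}=\{0,1\}$; $\Omega=\mathcal{X}^{\mathbb{N}}$ (paths $\omega=(\omega_1,\omega_2,\dots)$); $\mathbb{S}=\bigcup_{n\ge0}\mathcal X^n$ (situations), $|s|$ length, $\omega_{1:n}=(\omega_1,\dots,\omega_n)$, $\omega_{1:0}$ the empty string. $\mathcal I$: the set of nonempty closed intervals $I\subseteq[0,1]$ (interval forecasts). A path $\omega$ is CH-random (resp. wCH-random) for $I\in\mathcal I$ if for every recursive (resp. recursive and temporal, i.e. $S(s)$ depends only on $|s|$) selection process $S:\mathbb S\to\{0,1\}$ with $\lim_n\sum_{k=0}^{n-1}S(\omega_{1:k})=\infty$, we have $\min I\le\liminf_n\frac{\sum_{k=0}^{n-1}S(\omega_{1:k})\omega_{k+1}}{\sum_{k=0}^{n-1}S(\omega_{1:k})}\le\limsup_n\frac{\sum_{k=0}^{n-1}S(\omega_{1:k})\omega_{k+1}}{\sum_{k=0}^{n-1}S(\omega_{1:k})}\le\max I$. $\mathcal I_\textnormal{R}(\omega)=\{I\in\mathcal I:\omega\text{ is R-random for }I\}$ and $I_\textnormal{R}(\omega)=\bigcap_{I\in\mathcal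 I_\textnormal{R}(\omega)}I$. *)

From HB Require Import structures.
From mathcomp Require Import all_boot all_order all_algebra.
From mathcomp Require Import all_classical all_reals all_analysis.
Set Implicit Arguments. Unset Strict Implicit. Unset Printing Implicit Defensive.
Import Order.TTheory GRing.Theory Num.Theory.

(* Codes of mu-recursive functions (argument lists of arbitrary length;     *)
(* missing arguments default to 0).                                         *)
Inductive prcode : Type :=
| PZero : prcode
| PSucc : prcode
| PProj : nat -> prcode
| PComp : prcode -> list prcode -> prcode
| PPrec : prcode -> prcode -> prcode
| PMu   : prcode -> prcode.

Inductive prEval : prcode -> list nat -> nat -> Prop :=
| ev_zero xs : prEval PZero xs 0
| ev_succ xs : prEval PSucc xs (head 0 xs).+1
| ev_proj i xs : prEval (PProj i) xs (nth 0 xs i)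
| ev_comp f gs xs ys y :
    prEvals gs xs ys -> prEval f ys y -> prEval (PComp f gs) xs y
| ev_prec0 g h xs y :
    prEval g xs y -> prEval (PPrec g h) (0 :: xs) y
| ev_precS g h n xs y z :
    prEval (PPrec g h) (n :: xs) y -> prEval h [:: n, y & xs] z ->
    prEval (PPrec g h) (n.+1 :: xs) z
| ev_mu f xs n :
    prEval f (n :: xs) 0 ->
    (forall m, (m < n)%N -> exists k, prEval f (m :: xs) k.+1) ->
    prEval (PMu f) xs n
with prEvals : list prcode -> list nat -> list nat -> Prop :=
| evs_nil xs : prEvals nil xs nil
| evs_cons g gs xs y ys :
    prEval g xs y -> prEvals gs xs ys -> prEvals (g :: gs) xs (y :: ys).

(* Bijective encoding of finite binary strings into nat:                    *)
(* s = (b1,...,bn) |-> the number with binary expansion 1 b1 ... bn, minus 1. *)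
Definition enc_bits (s : seq bool) : nat :=
  (foldl (fun n (b : bool) => n.*2 + b) 1 s).-1.

Definition recursive_sel (S : seq bool -> bool) : Prop :=
  exists c : prcode, forall s, prEval c [:: enc_bits s] (nat_of_bool (S s)).

Definition temporal_sel (S : seq bool -> bool) : Prop :=
  forall s t, size s = size t -> S s = S t.

(* A path omega in {0,1}^N is a map nat -> bool with omega_{k+1} = omega k;  *)
(* the situation omega_{1:k} is [:: omega 0; ...; omega (k-1)].              *)
Definition prefix (omega : nat -> bool) (k : nat) : seq bool := mkseq omega k.

Definition sel_count (S : seq bool -> bool) (omega : nat -> bool) (n : nat) : nat :=
  \sum_(k < n) nat_of_bool (S (prefix omega k)).

Definition sel_ones (S : seq bool -> bool) (omega : nat -> bool) (n : nat) : nat :=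
  \sum_(k < n) (nat_of_bool (S (prefix omega k)) * nat_of_bool (omega k))%N.

Definition sel_freq {R : realType} (S : seq bool -> bool) (omega : nat -> bool)
  (n : nat) : R :=
  ((sel_ones S omega n)%:R / (sel_count S omega n)%:R)%R.

Inductive randomness := CH | wCH.

Definition admissible (Rn : randomness) (S : seq bool -> bool)
  (omega : nat -> bool) : Prop :=
  recursive_sel S /\
  (Rn = wCH -> temporal_sel S) /\
  (forall M : nat, exists N : nat, forall n, (N <= n)%N -> (M <= sel_count S omega n)%N).

Definition random_for {R : realType} (Rn : randomness) (omega : nat -> bool)
  (a b : R) : Prop :=
  forall S, admissible Rn S omega ->
    ((a%:E <= limn_einf (fun n => (sel_freq (R:=R) S omega n)%:E)) /\
     (limn_esup (fun n => (sel_freq (R:=R) S omega n)%:E) <= b%:E))%E.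

Definition interval_forecast {R : realType} (I : set R) : Prop :=
  exists a b : R, (0 <= a /\ a <= b /\ b <= 1)%R /\ I = `[a, b]%classic.

Definition random_for_set {R : realType} (Rn : randomness) (omega : nat -> bool)
  (I : set R) : Prop :=
  exists a b : R, (0 <= a /\ a <= b /\ b <= 1)%R /\ I = `[a, b]%classic /\
    random_for Rn omega a b.

Definition I_R {R : realType} (Rn : randomness) (omega : nat -> bool) : set R :=
  (\bigcap_(I in [set I : set R | random_for_set Rn omega I]) I)%classic.

From HB Require Import structures.
From mathcomp Require Import all_boot all_order all_algebra.
From mathcomp Require Import all_classical all_reals all_analysis.
Import Order.TTheory GRing.Theory Num.Theory.

(* Being R-random for [a, b] only constrains a from above and b from below:
   a must lie below L, the infimum over admissible selections of the lower
   limiting frequencies, and b above U, the supremum of the upper ones.  The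
   selection that picks every situation is admissible, so 0 <= L <= U <= 1,
   and [L, U] is then both an interval forecast for omega and contained in
   every other one; in particular it is the intersection I_R(omega). *)

Local Open Scope ring_scope.

Lemma sel_ones_le_count S omega n : (sel_ones S omega n <= sel_count S omega n)%N.
Proof.
by apply: leq_sum => k _; case: (S _); case: (omega k).
Qed.

Lemma sel_freq_ge0 (R : realType) S omega n : 0 <= sel_freq (R:=R) S omega n.
Proof. by rewrite divr_ge0. Qed.

Lemma sel_freq_le1 (R : realType) S omega n : sel_freq (R:=R) S omega n <= 1.
Proof.
rewrite /sel_freq; have [->|count_neq0] := eqVneq (sel_count S omega n) 0%N.
  by rewrite invr0 mulr0.
by rewrite ler_pdivrMr ?ltr0n ?lt0n // mul1r ler_nat sel_ones_le_count.
Qed.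

Lemma admissible_selT Rn omega : admissible Rn (fun _ => true) omega.
Proof.
split; [|split] => //.
- exists (PComp PSucc [:: PZero]) => s.
  by apply: (ev_comp (ys := [:: 0%N])); constructor; constructor.
- move=> M; exists M => n leMn.
  by rewrite /sel_count sum_nat_const card_ord muln1.
Qed.

Local Open Scope ereal_scope.

Lemma limn_esup_le (R : realType) (u : (\bar R)^nat) (M : \bar R) :
  (forall n, u n <= M) -> limn_esup u <= M.
Proof.
move=> uM; rewrite limn_esup_lim; apply: lime_le; first exact: is_cvg_esups.
by apply: nearW => m; apply: ge_ereal_sup => _ [k _ <-].
Qed.

Lemma limn_einf_ge (R : realType) (u : (\bar R)^nat) (M : \bar R) :
  (forall n, M <= u n) -> M <= limn_einf u.
Proof.
move=> Mu; rewrite limn_einf_lim; apply: lime_ge; first exact: is_cvg_einfs.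
by apply: nearW => m; apply: le_ereal_inf_tmp => _ [k _ <-].
Qed.

Section LimitingFrequencies.
Variables (R : realType) (Rn : randomness) (omega : nat -> bool).

Let freq S : (\bar R)^nat := fun n => (sel_freq S omega n)%:E.
Let adm := [set S | admissible Rn S omega]%classic.

Definition lower_freq : \bar R := ereal_inf [set limn_einf (freq S) | S in adm].
Definition upper_freq : \bar R := ereal_sup [set limn_esup (freq S) | S in adm].

Lemma random_forE (a b : R) :
  random_for Rn omega a b <-> a%:E <= lower_freq /\ upper_freq <= b%:E.
Proof.
split=> [rab | [a_le b_ge] S admS].
  split; [apply: le_ereal_inf_tmp | apply: ge_ereal_sup];
    by move=> _ [S admS <-]; case: (rab S admS).
split; [apply: (le_trans a_le); apply: ereal_inf_lbound
       | apply: le_trans b_ge; apply: ereal_sup_ubound]; by exists S.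
Qed.

Lemma lower_freq_ge0 : 0 <= lower_freq.
Proof.
apply: le_ereal_inf_tmp => _ [S _ <-].
by apply: limn_einf_ge => n; rewrite lee_fin sel_freq_ge0.
Qed.

Lemma upper_freq_le1 : upper_freq <= 1.
Proof.
apply: ge_ereal_sup => _ [S _ <-].
by apply: limn_esup_le => n; rewrite lee_fin sel_freq_le1.
Qed.

Lemma lower_le_upper_freq : lower_freq <= upper_freq.
Proof.
have admT : adm (fun _ => true) by exact: admissible_selT.
apply: (le_trans (ereal_inf_lbound _)); first by exists (fun _ => true).
apply: (le_trans (limn_einf_sup _)).
by apply: ereal_sup_ubound; exists (fun _ => true).
Qed.

Lemma lower_freq_fineK : (fine lower_freq)%:E = lower_freq.
Proof.
apply: fineK; rewrite ge0_fin_numE; last exact: lower_freq_ge0.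
exact: le_lt_trans lower_le_upper_freq (le_lt_trans upper_freq_le1 (ltry 1)).
Qed.

Lemma upper_freq_fineK : (fine upper_freq)%:E = upper_freq.
Proof.
apply: fineK; rewrite ge0_fin_numE; last exact: le_trans lower_freq_ge0 lower_le_upper_freq.
exact: le_lt_trans upper_freq_le1 (ltry 1).
Qed.

Definition freq_itv : set R := `[fine lower_freq, fine upper_freq]%classic.

Lemma random_for_set_freq_itv : random_for_set Rn omega freq_itv.
Proof.
exists (fine lower_freq), (fine upper_freq); split; last first.
  by split=> //; apply/random_forE; rewrite lower_freq_fineK upper_freq_fineK.
rewrite -!lee_fin lower_freq_fineK upper_freq_fineK.
by split; [exact: lower_freq_ge0 | split; [exact: lower_le_upper_freq | exact: upper_freq_le1]].
Qed.

Lemma freq_itv_subset I : random_for_set Rn omega I -> (freq_itv `<=` I)%classic.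
Proof.
move=> [a [b [_ [-> /random_forE [a_le b_ge]]]]].
by apply: subset_itv; rewrite bnd_simp -lee_fin ?lower_freq_fineK ?upper_freq_fineK.
Qed.

Lemma I_RE : I_R Rn omega = freq_itv.
Proof.
apply/seteqP; split.
  exact: (bigcap_inf (F := id) random_for_set_freq_itv).
by apply: sub_bigcap => I; exact: freq_itv_subset.
Qed.

End LimitingFrequencies.

Theorem proposition2 (R : realType) (Rn : randomness) (omega : nat -> bool) :
  random_for_set Rn omega (I_R (R:=R) Rn omega) /\
  (forall I : set R, random_for_set Rn omega I ->
     (I_R (R:=R) Rn omega `<=` I)%classic).
Proof.
rewrite I_RE; split; [exact: random_for_set_freq_itv | exact: freq_itv_subset].
Qed.
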